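(* For every positive integer $r$, $\mathcal{I}_B(r)$ is a di-ideal of $\mathcal{B}_\Sigma$.
   Context: Let $\mathbf{k}$ be a field of characteristic $0$ and $B=\bigoplus_{d\ge0}B_d$ a commutative graded $\mathbf{k}$-algebra with $B_0=\mathbf{k}$, generated by $B_1$, $\dim B_1<\infty$. Let $\mathcal{B}_\Sigma=\bigoplus_{n,d}\mathrm{Sym}^n(B_d)$, with product $\cdot$ the multiplication of $\mathrm{Sym}(B_d)$ (zero between different $d$) and comultiplication $\Delta(w_1\cdots w_n)=\sum_{S\subseteq[n]}w_S\otimes w_{[n]\setminus S}$, $w_S=\prod_{i\in S}w_i$. Let $\mathcal{B}^\Sigma=\bigoplus_{n,d}(B_d^{\otimes n})^{\Sigma_n}$ with product $*$ given by factorwise multiplication $(u_1\otimes\cdots\otimes u_n)*(v_1\otimes\cdots\otimes v_n)=u_1v_1\otimes\cdots\otimes u_nv_n$ from $(B_d^{\otimes n})^{\Sigma_n}\otimes(B_e^{\otimes n})^{\Sigma_n}$ to $(B_{d+e}^{\otimes n})^{\Sigma_n}$ (zero for different $n$). $\mathfrak{S}:\mathrm{Sym}^n(B_d)\to(B_d^{\otimes n})^{\Sigma_n}$, $w_1\cdots w_n\mapsto\sum_{\tau\in\Sigma_n}w_{\tau(1)}\otimes\cdots\otimes w_{\tau(n)}$. An ideal of $\mathcal{B}_\Sigma$ is a bihomogeneous subspace closed under $\cdot$-multiplication by $\mathcal{B}_\Sigma$; it is a di-ideal if moreover $g*f\in\mathfrak{S}(\mathcal{I})$ for all $f\in\mathfrak{S}(\mathcal{I})$,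 $g\in\mathcal{B}^\Sigma$. The join of ideals: $(\mathcal{I}\star\mathcal{J})_{d,n}$ is the kernel of $\mathrm{Sym}^n(B_d)\xrightarrow{\Delta}\bigoplus_{i=0}^n(\mathcal{B}_\Sigma/\mathcal{I})_{d,i}\otimes(\mathcal{B}_\Sigma/\mathcal{J})_{d,n-i}$. Define $\mathcal{I}_B(1)\subseteq\mathcal{B}_\Sigma$ by $\mathcal{I}_B(1)_{d,n}=\ker(\mathrm{Sym}^n(B_d)\to B_{dn})$ (the map induced by multiplication in $B$), and $\mathcal{I}_B(r)=\mathcal{I}_B(1)^{\star r}$ ($r$-fold join). *)

From HB Require Import structures.
From mathcomp Require Import all_boot all_order all_algebra all_fingroup.
From mathcomp Require Import mpoly.
Set Implicit Arguments. Unset Strict Implicit. Unset Printing Implicit Defensive.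
Import GRing.Theory.
Local Open Scope ring_scope.

(* A commutative graded k-algebra B = (+)_d B_d, described inside a           *)
(* commutative k-algebra B together with, for each degree d, a finite basis   *)
(* gbas d : 'I_(gdim d) -> B of B_d and the coordinate functionals gcrd d.    *)
(* An element of B_d is represented by its coordinate vector 'I_(gdim d) -> k. *)
Record gradedData (k : fieldType) (B : comAlgType k) := GradedData {
  gdim : nat -> nat;
  gbas : forall d, 'I_(gdim d) -> B;
  gcrd : forall d, B -> 'I_(gdim d) -> k
}.

Arguments gdim {k B} g d.
Arguments gbas {k B} g d j.
Arguments gcrd {k B} g d _ j.

Section Graded.
Variables (k : fieldType) (B : comAlgType k) (G : gradedData B).

Local Notation N := (gdim G).

Definition gvec (d : nat) (c : 'I_(N d) -> k) : B := \sum_(j < N d) c j *: gbas G d j.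

(* The axioms: B = (+)_d B_d is a graded commutative k-algebra, B_0 = k,
   generated by B_1 (and dim B_1 = gdim 1 < oo). *)
Definition is_graded_alg : Prop :=
  (forall d (c : 'I_(N d) -> k) i, gcrd G d (gvec c) i = c i) /\
  (forall x : B, exists (D : nat) (c : forall d, 'I_(N d) -> k),
      x = \sum_(d < D) gvec (c d)) /\
  (forall (D : nat) (c : forall d, 'I_(N d) -> k),
      \sum_(d < D) gvec (c d) = 0 -> forall d, (d < D)%N -> forall i, c d i = 0) /\
  (forall d e (i : 'I_(N d)) (j : 'I_(N e)),
      exists c : 'I_(N (d + e)) -> k, gbas G d i * gbas G e j = gvec c) /\
  (exists c : 'I_(N 0) -> k, gvec c = 1) /\
  (forall c : 'I_(N 0) -> k, exists a : k, gvec c = a%:A) /\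
  (forall d (i : 'I_(N d)), exists c : {ffun 'I_d -> 'I_(N 1)} -> k,
      gbas G d i = \sum_(t : {ffun 'I_d -> 'I_(N 1)}) c t *: \prod_(j < d) gbas G 1 (t j)).

(* ---------------- Sym(B_d) = {mpoly k[N d]} ('X_j <-> gbas d j) ------------ *)

Definition symlin d (v : 'I_(N d) -> k) : {mpoly k[N d]} := \sum_(j < N d) v j *: 'X_j.

(* the map Sym^n(B_d) -> B_{dn} induced by multiplication in B
   (composed with the inclusion B_{dn} \subset B) *)
Definition symev d (p : {mpoly k[N d]}) : B := mmap (in_alg B) (gbas G d) p.

(* Sym(B_d) (x) Sym(B_d) = {mpoly k[N d + N d]}, left factor on the variables
   'X_(lshift _ j), right factor on the variables 'X_(rshift _ j). *)
Definition tleft d (p : {mpoly k[N d]}) : {mpoly k[N d + N d]} :=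
  mmap (@mpolyC _ _) (fun j => 'X_(lshift (N d) j)) p.
Definition tright d (p : {mpoly k[N d]}) : {mpoly k[N d + N d]} :=
  mmap (@mpolyC _ _) (fun j => 'X_(rshift (N d) j)) p.
(* the comultiplication: Delta(w_1...w_n) = sum_S w_S (x) w_{[n]\S}, i.e. the
   variables are primitive: Delta(X_j) = X_j (x) 1 + 1 (x) X_j *)
Definition comult d (p : {mpoly k[N d]}) : {mpoly k[N d + N d]} :=
  mmap (@mpolyC _ _) (fun j => 'X_(lshift (N d) j) + 'X_(rshift (N d) j)) p.

(* A bihomogeneous subset of B_Sigma : its (d,n) components, subsets of
   Sym^n(B_d). *)
Definition family := forall d : nat, nat -> {mpoly k[N d]} -> Prop.

Definition is_ideal (I : family) : Prop :=
  forall d n,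
    (forall p, I d n p -> p \is n.-homog) /\
    I d n 0 /\
    (forall p q, I d n p -> I d n q -> I d n (p + q)) /\
    (forall (a : k) p, I d n p -> I d n (a *: p)) /\
    (forall p q m, I d n p -> q \is m.-homog -> I d (n + m)%N (q * p)).

Definition in_span (V : lmodType k) (P : V -> Prop) (x : V) : Prop :=
  exists s : seq (k * V), foldr (fun y Q => P y.2 /\ Q) True s /\
    x = \sum_(y <- s) y.1 *: y.2.

(* kernel of (B_Sigma/I)_{d,i} (x) (B_Sigma/J)_{d,n-i}, i = 0..n, inside
   Sym(B_d) (x) Sym(B_d):  sum_i  I_{d,i} (x) Sym^{n-i} + Sym^i (x) J_{d,n-i} *)
Definition join_gen (I J : family) d n (x : {mpoly k[N d + N d]}) : Prop :=
  exists i : nat, (i <= n)%N /\ exists a b : {mpoly k[N d]},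
    x = tleft a * tright b /\
    ((I d i a /\ b \is (n - i)%N.-homog) \/ (a \is i.-homog /\ J d (n - i)%N b)).

Definition join (I J : family) : family := fun d n p =>
  p \is n.-homog /\ in_span (@join_gen I J d n) (comult p).

Definition IB1 : family := fun d n p => p \is n.-homog /\ symev p = 0.

(* I_B(r) = I_B(1) * ... * I_B(1)  (r factors, r >= 1) *)
Definition IB (r : nat) : family := iter r.-1 (fun I => join I IB1) IB1.

(* T t = coefficient of gbas d (t 0) (x) ... (x) gbas d (t (n-1)) *)
Definition tensor d n := {ffun 'I_n -> 'I_(N d)} -> k.

Definition is_sym_tensor d n (T : tensor d n) : Prop :=
  forall (s : 'S_n) (t : {ffun 'I_n -> 'I_(N d)}), T [ffun i => t (s i)] = T t.

(* structure constants: gbas d i * gbas e j = sum_l mu i j l * gbas (d+e) l *)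
Definition mu d e (i : 'I_(N d)) (j : 'I_(N e)) (l : 'I_(N (d + e))) : k :=
  gcrd G (d + e) (gbas G d i * gbas G e j) l.

(* factorwise product (u_1 (x)..(x) u_n) * (v_1 (x)..(x) v_n) = u_1v_1 (x)..(x) u_nv_n *)
Definition tmul d e n (T : tensor d n) (U : tensor e n) : tensor (d + e) n :=
  fun t => \sum_(t1 : {ffun 'I_n -> 'I_(N d)}) \sum_(t2 : {ffun 'I_n -> 'I_(N e)})
    T t1 * U t2 * \prod_(i < n) mu (t1 i) (t2 i) (t i).

(* An element of Sym^n(B_d) given as sum_(c,w) c * w_1 ... w_n (w_i in B_d
   given by coordinates); every element of Sym^n(B_d) has such a representation. *)
Definition symrep d n (s : seq (k * ('I_n -> 'I_(N d) -> k))) : {mpoly k[N d]} :=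
  \sum_(y <- s) y.1 *: \prod_(i < n) symlin (y.2 i).

(* The symmetrization map S : w_1...w_n |-> sum_tau w_tau(1) (x) ... (x) w_tau(n),
   applied to the same representation. *)
Definition Srep d n (s : seq (k * ('I_n -> 'I_(N d) -> k))) : tensor d n :=
  fun t => \sum_(y <- s) y.1 * \sum_(tau : 'S_n) \prod_(i < n) y.2 (tau i) (t i).

Definition in_SI (I : family) d n (T : tensor d n) : Prop :=
  exists s, I d n (symrep s) /\ forall t, Srep s t = T t.

Definition is_diideal (I : family) : Prop :=
  is_ideal I /\
  forall d e n (f : tensor d n) (g : tensor e n),
    in_SI I f -> is_sym_tensor g -> in_SI I (tmul g f).

End Graded.

Arguments IB {k B} G r.
Arguments IB1 {k B} G.

(* Multiplication by an element v of B_e is a linear map B_d -> B_(e+d); it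
   induces an algebra map sym_mulv v : Sym(B_d) -> Sym(B_(e+d)) which commutes
   with the comultiplication and multiplies the evaluation Sym^n(B_d) -> B_(dn)
   by v^n.  Hence I_B(1), and inductively every join I_B(r), is an ideal stable
   under all the maps sym_mulv v.  Conversely, polarizing a symmetric tensor g
   with Ryser's formula for the permanent writes n! (g * S(f)) as S of a linear
   combination of the sym_mulv v (f); in characteristic 0 this gives the
   di-ideal property for every such stable ideal. *)

From Pilot Require Import Defs.
From HB Require Import structures.
From mathcomp Require Import all_boot all_order all_algebra all_fingroup.
From mathcomp Require Import mpoly.
From mathcomp Require Import zify.
Set Implicit Arguments. Unset Strict Implicit. Unset Printing Implicit Defensive.
Import GRing.Theory.
Local Open Scope ring_scope.

Section Span.
Variables (k : fieldType) (V : lmodType k).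
Implicit Types (P : V -> Prop) (x : V).

Lemma in_spanE P x :
  in_span P x <-> exists s : seq (k * V), (forall y, y \in s -> P y.2) /\
    x = \sum_(y <- s) y.1 *: y.2.
Proof.
have foldrP (s : seq (k * V)) :
    foldr (fun y Q => P y.2 /\ Q) True s <-> (forall y, y \in s -> P y.2).
  elim: s => [|y s IH] /=; first by split.
  split=> [[Py /IH Ps] z|Ps]; first by rewrite inE => /orP[/eqP->|/Ps].
  split; first by apply: Ps; rewrite mem_head.
  by apply/IH => z zs; apply: Ps; rewrite inE zs orbT.
by split=> -[s [/foldrP Ps ->]]; exists s; split=> //; apply/foldrP.
Qed.

Lemma mem_in_span P x : P x -> in_span P x.
Proof.
move=> Px; apply/in_spanE; exists [:: (1, x)].
by rewrite big_seq1 scale1r; split=> // y; rewrite inE => /eqP ->.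
Qed.

Lemma in_span0 P : in_span P 0.
Proof. by apply/in_spanE; exists [::]; rewrite big_nil. Qed.

Lemma in_spanD P (x y : V) : in_span P x -> in_span P y -> in_span P (x + y).
Proof.
move=> /in_spanE[s [Ps ->]] /in_spanE[t [Pt ->]]; apply/in_spanE; exists (s ++ t).
by rewrite big_cat; split=> // z; rewrite mem_cat => /orP[/Ps|/Pt].
Qed.

Lemma in_spanZ P a x : in_span P x -> in_span P (a *: x).
Proof.
move=> /in_spanE[s [Ps ->]]; apply/in_spanE.
exists [seq (a * y.1, y.2) | y <- s]; split; first by move=> z /mapP[y /Ps ? ->].
by rewrite big_map scaler_sumr; apply: eq_bigr => y _; rewrite scalerA.
Qed.

Lemma in_span_sum P (I : eqType) (r : seq I) (F : I -> V) :
  (forall i, i \in r -> in_span P (F i)) -> in_span P (\sum_(i <- r) F i).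
Proof.
elim: r => [|i r IH] PF; first by rewrite big_nil; apply: in_span0.
rewrite big_cons; apply: in_spanD; first by apply: PF; rewrite mem_head.
by apply: IH => j jr; apply: PF; rewrite inE jr orbT.
Qed.

End Span.

Lemma in_span_image (k : fieldType) (V W : lmodType k) (P : V -> Prop) (Q : W -> Prop)
    (f : V -> W) (x : V) :
  {morph f : u v / u + v} -> (forall a u, f (a *: u) = a *: f u) ->
  (forall u, P u -> in_span Q (f u)) -> in_span P x -> in_span Q (f x).
Proof.
move=> fD fZ PQ /in_spanE[s [Ps ->]].
have -> : f (\sum_(y <- s) y.1 *: y.2) = \sum_(y <- s) y.1 *: f y.2.
  elim: s {Ps} => [|y s IH]; last by rewrite !big_cons fD fZ IH.
  by rewrite !big_nil -(scale0r 0) fZ scale0r.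
by apply: in_span_sum => y /Ps /PQ; apply: in_spanZ.
Qed.

Section LinearSubstitution.
Variables (R S : comNzRingType) (n : nat).

Lemma eq_mmap (f : R -> S) (h1 h2 : 'I_n -> S) p :
  h1 =1 h2 -> mmap f h1 p = mmap f h2 p.
Proof. by move=> eh; apply: eq_bigr => m _; rewrite (mmap1_eq _ eh). Qed.

Lemma mmap_mmapC m (f : {rmorphism R -> S}) (h1 : 'I_n -> {mpoly R[m]}) (h2 : 'I_m -> S) p :
  mmap f h2 (mmap (@mpolyC _ _) h1 p) = mmap f (fun i => mmap f h2 (h1 i)) p.
Proof.
rewrite [mmap _ h1 p]/mmap raddf_sum [RHS]/mmap; apply: eq_bigr => mm _.
rewrite /= rmorphM /= mmapC /mmap1 rmorph_prod; congr (_ * _).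
by apply: eq_bigr => i _; rewrite rmorphXn.
Qed.

Lemma mmap_linear_form m (h : 'I_n -> {mpoly R[m]}) (c : 'I_n -> R) :
  mmap (@mpolyC _ _) h (\sum_(j < n) c j *: 'X_j) = \sum_(j < n) c j *: h j.
Proof.
rewrite raddf_sum; apply: eq_bigr => j _.
by rewrite /= mmapZ mmapX mmap1U mul_mpolyC.
Qed.

Lemma mpolyX_dhomog1 (i : 'I_n) : ('X_i : {mpoly R[n]}) \is 1.-homog.
Proof. by rewrite dhomogX; apply/eqP; exact: mdeg1. Qed.

Lemma mmap_dhomog m (h : 'I_n -> {mpoly R[m]}) d p :
  (forall i, h i \is 1.-homog) -> p \is d.-homog ->
  mmap (@mpolyC _ _) h p \is d.-homog.
Proof.
move=> h1 /dhomogP pd; rewrite /mmap big_seq; apply: rpred_sum => mm /pd <-.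
suff: mmap1 h mm \is (mdeg mm).-homog by rewrite mul_mpolyC; apply: rpredZ.
rewrite mdegE /mmap1.
apply: (big_ind2 (fun q (e : nat) => q \is e.-homog)) => [|? ? ? ? |i _].
- exact: dhomog1.
- exact: dhomogM.
- by rewrite -[X in X.-homog]mul1n; apply: dhomogMn.
Qed.

Lemma mmap_mull_dhomog (f : {rmorphism R -> S}) (u : S) (h : 'I_n -> S) p d :
  p \is d.-homog -> mmap f (fun j => u * h j) p = u ^+ d * mmap f h p.
Proof.
move=> /dhomogP pd; rewrite /mmap mulr_sumr big_seq [RHS]big_seq.
apply: eq_bigr => mm /pd <-; rewrite mulrCA; congr (_ * _).
rewrite /mmap1; under eq_bigr do rewrite exprMn.
by rewrite big_split /= prodrXr mdegE.
Qed.

End LinearSubstitution.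

Section Ideals.
Variables (k : fieldType) (B : comAlgType k) (G : gradedData B).
Local Notation N := (gdim G).
Implicit Types (I J : Defs.family G) (d n : nat).

Lemma ideal_sum I d n (T : eqType) (r : seq T) (F : T -> {mpoly k[N d]}) :
  is_ideal I -> (forall x, x \in r -> I d n (F x)) -> I d n (\sum_(x <- r) F x).
Proof.
move=> /(_ d n)[_ [I0 [ID _]]]; elim: r => [|x r IH] IF; first by rewrite big_nil.
rewrite big_cons; apply: ID; first by apply: IF; rewrite mem_head.
by apply: IH => y yr; apply: IF; rewrite inE yr orbT.
Qed.

Lemma IB1_ideal : is_ideal (IB1 G).
Proof.
move=> d n; split; first by move=> p [].
split; first by split; [exact: dhomog0 | rewrite /symev raddf0].
split.
  move=> p q [hp ep] [hq eq]; split; first exact: rpredD.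
  by rewrite /symev raddfD /= -!/(symev _) ep eq addr0.
split.
  by move=> a p [hp ep]; split; [exact: rpredZ | rewrite /symev mmapZ -/(symev _) ep mulr0].
move=> p q m [hp ep] hq; split; first by rewrite addnC dhomogM.
by rewrite /symev in ep *; rewrite rmorphM /= ep mulr0.
Qed.

Definition mnm_left d (mm : 'X_{1..N d + N d}) : 'X_{1..N d} :=
  [multinom mm (lshift _ i) | i < N d].
Definition mnm_right d (mm : 'X_{1..N d + N d}) : 'X_{1..N d} :=
  [multinom mm (rshift _ i) | i < N d].

Lemma mpolyX_split d (mm : 'X_{1..N d + N d}) :
  'X_[mm] = tleft (G := G) 'X_[mnm_left mm] * tright (G := G) 'X_[mnm_right mm].
Proof.
rewrite /tleft /tright !mmapX /mmap1 mpolyXE_id big_split_ord /=.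
by congr (_ * _); apply: eq_bigr => i _; rewrite mnmE.
Qed.

Lemma mdeg_split d (mm : 'X_{1..N d + N d}) :
  mdeg mm = (mdeg (mnm_left mm) + mdeg (mnm_right mm))%N.
Proof.
rewrite !mdegE big_split_ord /=.
by congr (_ + _)%N; apply: eq_bigr => i _; rewrite mnmE.
Qed.

Lemma comult_dhomog d m (q : {mpoly k[N d]}) :
  q \is m.-homog -> comult (G := G) q \is m.-homog.
Proof. by apply: mmap_dhomog => i; apply: rpredD; apply: mpolyX_dhomog1. Qed.

Lemma join_gen_mulX I J d n (mm : 'X_{1..N d + N d}) (y : {mpoly k[N d + N d]}) :
  is_ideal I -> is_ideal J -> join_gen I J n y ->
  join_gen I J (n + mdeg mm) ('X_[mm] * y).
Proof.
move=> HI HJ [i [le_in [a [b [-> Iab]]]]].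
have Xhomog (m : 'X_{1..N d}) : ('X_[m] : {mpoly k[N d]}) \is (mdeg m).-homog.
  by rewrite dhomogX.
rewrite mpolyX_split mdeg_split mulrACA -!rmorphM /=.
set mL := mnm_left mm; set mR := mnm_right mm.
exists (i + mdeg mL)%N; split; first lia.
exists ('X_[mL] * a), ('X_[mR] * b); split=> //.
have -> : (n + (mdeg mL + mdeg mR) - (i + mdeg mL) = mdeg mR + (n - i))%N by lia.
case: Iab => [[Ia hb]|[ha Jb]]; [left|right]; split.
- exact: (HI d i).2.2.2.2.
- exact: dhomogM.
- by rewrite addnC; apply: dhomogM.
- by rewrite addnC; apply: (HJ d (n - i)%N).2.2.2.2.
Qed.

Lemma join_ideal I J : is_ideal I -> is_ideal J -> is_ideal (join I J).
Proof.
move=> HI HJ d n; split; first by move=> p [].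
split; first by rewrite /join /comult raddf0 dhomog0; split=> //; apply: in_span0.
split.
  move=> p q [hp sp] [hq sq]; rewrite /join /comult raddfD -!/(comult _).
  by split; [apply: rpredD | apply: in_spanD].
split.
  move=> a p [hp sp]; rewrite /join /comult mmapZ -/(comult _) mul_mpolyC.
  by split; [apply: rpredZ | apply: in_spanZ].
move=> p q m [hp sp] hq; split; first by rewrite addnC dhomogM.
rewrite /comult rmorphM /= -!/(comult _) [comult q]mpolyE mulr_suml.
apply: in_span_sum => mm mm_q; rewrite -scalerAl; apply: in_spanZ.
apply: (in_span_image (P := join_gen I J n) (f := fun x => 'X_[mm] * x)) sp
  => [x y|a x|y Iy].
- exact: mulrDr.
- by rewrite scalerAr.
- rewrite -(dhomog_mf (comult_dhomog hq) mm_q).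
  exact/mem_in_span/join_gen_mulX.
Qed.

End Ideals.

Lemma split_lshift m n (j : 'I_m) : split (lshift n j) = inl j.
Proof. exact: (unsplitK (inl j)). Qed.

Lemma split_rshift m n (j : 'I_n) : split (rshift m j) = inr j.
Proof. exact: (unsplitK (inr j)). Qed.

Section MultiplicationMap.
Variables (k : fieldType) (B : comAlgType k) (G : gradedData B).
Hypothesis gradedG : is_graded_alg G.
Local Notation N := (gdim G).
Implicit Types (I J : Defs.family G) (d e n : nat).

Definition mulv_form d e (v : 'I_(N e) -> k) (j : 'I_(N d)) : {mpoly k[N (e + d)]} :=
  symlin (fun l => \sum_(a < N e) v a * mu a j l).

(* Sym(B_d) -> Sym(B_(e+d)) induced by the linear map w |-> v w, v in B_e *)
Definition sym_mulv d e (v : 'I_(N e) -> k) (p : {mpoly k[N d]}) : {mpoly k[N (e + d)]} :=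
  mmap (@mpolyC _ _) (mulv_form v) p.

Definition mulv_closed I :=
  forall d e n (v : 'I_(N e) -> k) (p : {mpoly k[N d]}),
    I d n p -> I (e + d)%N n (sym_mulv v p).

Lemma symlin_dhomog1 d (c : 'I_(N d) -> k) : symlin c \is 1.-homog.
Proof. by apply: rpred_sum => j _; apply/rpredZ/mpolyX_dhomog1. Qed.

Lemma sym_mulv_dhomog d e (v : 'I_(N e) -> k) n (p : {mpoly k[N d]}) :
  p \is n.-homog -> sym_mulv v p \is n.-homog.
Proof. by apply: mmap_dhomog => j; apply: symlin_dhomog1. Qed.

Lemma symev_symlin d (c : 'I_(N d) -> k) : symev (symlin c) = gvec c.
Proof.
rewrite /symev /symlin raddf_sum; apply: eq_bigr => j _.
by rewrite /= mmapZ mmapX mmap1U mulr_algl.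
Qed.

Lemma gvec_gcrd_mul e d (a : 'I_(N e)) (j : 'I_(N d)) :
  gvec (gcrd G (e + d) (gbas G e a * gbas G d j)) = gbas G e a * gbas G d j.
Proof.
have [c ->] := gradedG.2.2.2.1 e d a j.
by apply: eq_bigr => l _; rewrite gradedG.1.
Qed.

Lemma symev_mulv_form d e (v : 'I_(N e) -> k) (j : 'I_(N d)) :
  symev (mulv_form v j) = gvec v * gbas G d j.
Proof.
rewrite /mulv_form symev_symlin /gvec mulr_suml.
under eq_bigr do rewrite scaler_suml.
rewrite exchange_big /=; apply: eq_bigr => a _.
rewrite -scalerAl -gvec_gcrd_mul /gvec scaler_sumr; apply: eq_bigr => l _.
by rewrite scalerA.
Qed.

Lemma symev_sym_mulv d e (v : 'I_(N e) -> k) n (p : {mpoly k[N d]}) :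
  p \is n.-homog -> symev (sym_mulv v p) = gvec v ^+ n * symev p.
Proof.
move=> hp; rewrite /symev /sym_mulv mmap_mmapC.
rewrite (eq_mmap _ (h2 := fun j => gvec v * gbas G d j)); first exact: mmap_mull_dhomog.
by move=> j; rewrite -symev_mulv_form.
Qed.

Lemma IB1_mulv_closed : mulv_closed (IB1 G).
Proof.
move=> d e n v p [hp ep]; split; first exact: sym_mulv_dhomog.
by rewrite (symev_sym_mulv _ hp) ep mulr0.
Qed.

(* sym_mulv v (x) sym_mulv v, on Sym(B_d) (x) Sym(B_d) *)
Definition sym_mulv2 d e (v : 'I_(N e) -> k) (P : {mpoly k[N d + N d]}) :
    {mpoly k[N (e + d) + N (e + d)]} :=
  mmap (@mpolyC _ _) (fun x => match split x with
     | inl j => tleft (mulv_form v j)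
     | inr j => tright (mulv_form v j) end) P.

Lemma comult_sym_mulv d e (v : 'I_(N e) -> k) (p : {mpoly k[N d]}) :
  comult (sym_mulv v p) = sym_mulv2 v (comult p).
Proof.
rewrite /comult /sym_mulv /sym_mulv2 !mmap_mmapC; apply: eq_mmap => j.
rewrite raddfD /= !mmapX !mmap1U split_lshift split_rshift.
rewrite /mulv_form /symlin /tleft /tright !mmap_linear_form -big_split /=.
by apply: eq_bigr => l _; rewrite scalerDr.
Qed.

Lemma sym_mulv2_tensor d e (v : 'I_(N e) -> k) (a b : {mpoly k[N d]}) :
  sym_mulv2 v (tleft a * tright b) = tleft (sym_mulv v a) * tright (sym_mulv v b).
Proof.
rewrite /sym_mulv2 rmorphM /=; congr (_ * _).
  rewrite /tleft /sym_mulv !mmap_mmapC; apply: eq_mmap => j.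
  by rewrite mmapX mmap1U split_lshift.
rewrite /tright /sym_mulv !mmap_mmapC; apply: eq_mmap => j.
by rewrite mmapX mmap1U split_rshift.
Qed.

Lemma join_mulv_closed I J : mulv_closed I -> mulv_closed J -> mulv_closed (join I J).
Proof.
move=> HI HJ d e n v p [hp sp]; split; first exact: sym_mulv_dhomog.
rewrite comult_sym_mulv.
apply: (in_span_image (P := join_gen I J n)) sp => [x y|a x|y [i [le_in [a [b [-> Iab]]]]]].
- by rewrite /sym_mulv2 raddfD.
- by rewrite /sym_mulv2 mmapZ mul_mpolyC.
apply: mem_in_span; rewrite sym_mulv2_tensor.
exists i; split=> //; exists (sym_mulv v a), (sym_mulv v b); split=> //.
case: Iab => [[Ia hb]|[ha Jb]]; [left|right]; split.
- exact: HI.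
- exact: sym_mulv_dhomog.
- exact: sym_mulv_dhomog.
- exact: HJ.
Qed.

Lemma IB_ideal_mulv_closed r : is_ideal (IB G r.+1) /\ mulv_closed (IB G r.+1).
Proof.
elim: r => [|r [Iideal Iclosed]].
  by split; [exact: IB1_ideal | exact: IB1_mulv_closed].
have -> : IB G r.+2 = join (IB G r.+1) (IB1 G) by [].
split; first exact: (join_ideal Iideal (IB1_ideal G)).
exact: (join_mulv_closed Iclosed IB1_mulv_closed).
Qed.

End MultiplicationMap.

Section Ryser.
Variable A : comNzRingType.

Local Notation sgn b := (if b then 1 else -1 : A).

Lemma prodr_natb (I : finType) (b : I -> bool) :
  \prod_i ((b i)%:R : A) = [forall i, b i]%:R.
Proof.
have [/forallP bT | /forallPn [i /negbTE bi]] := boolP [forall i, b i].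
  by rewrite big1 // => i _; rewrite bT.
by rewrite (bigD1 i) //= bi mul0r.
Qed.

Lemma sum_sgn_supset (T : finType) (C : pred T) :
  \sum_(eps : {ffun T -> bool}) (\prod_x sgn (eps x)) * [forall x, C x ==> eps x]%:R
  = [forall x, C x]%:R.
Proof.
under eq_bigr do rewrite -prodr_natb -big_split.
rewrite -prodr_natb -(bigA_distr_bigA (fun x b => sgn b * (C x ==> b)%:R)) /=.
apply: eq_bigr => x _; rewrite big_bool /= implybT mul1r.
by case: (C x); rewrite /= ?mulr0 ?addr0 ?mulN1r ?addrN.
Qed.

Lemma onto_injectiveb (T : finType) (f : {ffun T -> T}) :
  [forall x, x \in codom f] = injectiveb f.
Proof.
apply/idP/idP => [/forallP f_onto | /injectiveP f_inj].
  by apply: (@leq_size_uniq _ (enum T)); rewrite ?enum_uniq ?size_map.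
by apply/forallP => x; apply: inj_card_onto.
Qed.

Lemma ryser n (a : 'I_n -> 'I_n -> A) :
  \sum_(eps : {ffun 'I_n -> bool}) (\prod_x sgn (eps x)) * \prod_i \sum_(j | eps j) a i j
  = \sum_(s : 'S_n) \prod_i a i (s i).
Proof.
have expand (eps : {ffun 'I_n -> bool}) : \prod_i \sum_(j | eps j) a i j =
    \sum_(f : {ffun 'I_n -> 'I_n})
      [forall x, (x \in codom f) ==> eps x]%:R * \prod_i a i (f i).
  have indicator i : \sum_(j | eps j) a i j = \sum_j (eps j)%:R * a i j.
    by rewrite big_mkcond; apply: eq_bigr => j _; case: (eps j); rewrite ?mul1r ?mul0r.
  under eq_bigr do rewrite indicator.
  rewrite bigA_distr_bigA; apply: eq_bigr => f _; rewrite big_split prodr_natb.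
  suff -> : [forall i, eps (f i)] = [forall x, (x \in codom f) ==> eps x] by [].
  apply/forallP/forallP => [eps_f x | eps_codom i].
    by apply/implyP => /codomP[i ->].
  exact: implyP (eps_codom (f i)) (codom_f f i).
under eq_bigr do rewrite expand mulr_sumr.
rewrite exchange_big.
transitivity (\sum_(f : {ffun 'I_n -> 'I_n} | injectiveb f) \prod_i a i (f i)).
  rewrite [RHS]big_mkcond; apply: eq_bigr => f _; rewrite -onto_injectiveb.
  transitivity ([forall x, x \in codom f]%:R * \prod_i a i (f i) : A).
    by rewrite -sum_sgn_supset mulr_suml; apply: eq_bigr => eps _; rewrite mulrA.
  by case: forallP; rewrite ?mul1r ?mul0r.
rewrite (reindex (fun s : 'S_n => pval s)) /=; last first.
  exists (insubd (1%g : 'S_n)) => [s _ | f f_inj]; [exact: valKd | exact: insubdK].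
rewrite (eq_bigl xpredT) => [|s]; last exact: (valP s).
by apply: eq_bigr => s _; apply: eq_bigr => i _; rewrite pvalE.
Qed.

End Ryser.

Lemma reindex_ffun_perm (V : nmodType) (T : finType) n (F : {ffun 'I_n -> T} -> V)
    (s : 'S_n) :
  \sum_(t : {ffun 'I_n -> T}) F t = \sum_(t : {ffun 'I_n -> T}) F [ffun i => t (s i)].
Proof.
apply: reindex_inj => t1 t2 /ffunP eq_t; apply/ffunP => j.
by have := eq_t (s^-1 j)%g; rewrite !ffunE permKV.
Qed.

(* Ryser's formula turns the average of a symmetric multilinear expression
   over all permutations into a signed sum of products of linear forms. *)
Lemma polarization (k : fieldType) (V : comAlgType k) (T : finType) n
    (g : {ffun 'I_n -> T} -> k) (Q : 'I_n -> T -> V) :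
  (forall (s : 'S_n) (t : {ffun 'I_n -> T}), g [ffun i => t (s i)] = g t) ->
  n`!%:R *: \sum_t g t *: \prod_i Q i (t i) =
  \sum_t g t *: \sum_(eps : {ffun 'I_n -> bool})
     (\prod_x (if eps x then 1 else -1 : k)) *: \prod_i \sum_(j | eps j) Q i (t j).
Proof.
move=> g_sym.
transitivity (\sum_t g t *: \sum_(s : 'S_n) \prod_i Q i (t (s i))); last first.
  apply: eq_bigr => t _; congr (_ *: _).
  rewrite -(ryser (fun i j => Q i (t j))); apply: eq_bigr => eps _.
  rewrite -mulr_algl -in_algE rmorph_prod; congr (_ * _); apply: eq_bigr => x _.
  by case: (eps x); rewrite ?rmorph1 ?rmorphN1.
under [RHS]eq_bigr do rewrite scaler_sumr.
rewrite [RHS]exchange_big.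
transitivity (\sum_(s : 'S_n) \sum_t g t *: \prod_i Q i (t i)).
  by rewrite sumr_const card_Sn scaler_nat.
apply: eq_bigr => s _.
rewrite [LHS](reindex_ffun_perm _ s); apply: eq_bigr => t _.
by rewrite g_sym; congr (_ *: _); apply: eq_bigr => i _; rewrite ffunE.
Qed.

Section DiIdeal.
Variables (k : fieldType) (B : comAlgType k) (G : gradedData B).
Local Notation N := (gdim G).
Implicit Types (d e n : nat).

Definition mulb_crd e d (a : 'I_(N e)) (w : 'I_(N d) -> k) : 'I_(N (e + d)) -> k :=
  fun l => \sum_j w j * mu a j l.

(* g * S(sum_y y.1 w_1...w_n) = S(sum_(y, t1) g t1 y.1 (b_(t1 1) w_1)...(b_(t1 n) w_n)) *)
Definition tmul_rep e d n (g : tensor G e n) (s : seq (k * ('I_n -> 'I_(N d) -> k))) :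
   seq (k * ('I_n -> 'I_(N (e + d)) -> k)) :=
  [seq (g z.2 * z.1.1, fun i => mulb_crd (z.2 i) (z.1.2 i))
    | z <- [seq (y, t1) | y <- s, t1 <- enum {ffun 'I_n -> 'I_(N e)}]].

Lemma Srep_tmul_rep e d n (g : tensor G e n) (f : tensor G d n) s t :
  is_sym_tensor g -> (forall t, Srep s t = f t) -> Srep (tmul_rep g s) t = tmul g f t.
Proof.
move=> g_sym Sf; rewrite /Srep /tmul /tmul_rep big_map big_allpairs /=.
transitivity (\sum_(y <- s) \sum_(tau : 'S_n) \sum_(t1 : {ffun 'I_n -> 'I_(N e)})
   \sum_(t2 : {ffun 'I_n -> 'I_(N d)}) y.1 * g t1 *
     ((\prod_i y.2 (tau i) (t2 i)) * \prod_i mu (t1 i) (t2 i) (t i))).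
  apply: eq_bigr => y _; rewrite big_enum /=.
  under eq_bigr do rewrite mulr_sumr.
  rewrite exchange_big /=; apply: eq_bigr => tau _.
  transitivity (\sum_(t1 : {ffun 'I_n -> 'I_(N e)}) y.1 * g t1 *
      \prod_i mulb_crd (t1 i) (y.2 (tau i)) (t i)).
    rewrite [RHS](reindex_ffun_perm _ tau); apply: eq_bigr => t1 _.
    rewrite g_sym [g t1 * y.1]mulrC; congr (_ * _); apply: eq_bigr => i _.
    by rewrite ffunE.
  apply: eq_bigr => t1 _; rewrite -mulr_sumr; congr (_ * _).
  rewrite /mulb_crd bigA_distr_bigA /=; apply: eq_bigr => t2 _.
  by rewrite big_split.
symmetry.
transitivity (\sum_(t1 : {ffun 'I_n -> 'I_(N e)}) \sum_(t2 : {ffun 'I_n -> 'I_(N d)})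
   \sum_(y <- s) \sum_(tau : 'S_n) y.1 * g t1 *
     ((\prod_i y.2 (tau i) (t2 i)) * \prod_i mu (t1 i) (t2 i) (t i))).
  apply: eq_bigr => t1 _; apply: eq_bigr => t2 _.
  rewrite -Sf /Srep mulrAC [_ * \sum_(y <- s) _]mulr_sumr; apply: eq_bigr => y _.
  rewrite mulrCA [_ * \sum_tau _]mulr_sumr mulr_sumr; apply: eq_bigr => tau _.
  by rewrite -!mulrA; congr (_ * (_ * _)); exact: mulrC.
under eq_bigr do rewrite exchange_big /=.
rewrite exchange_big /=; apply: eq_bigr => y _.
under eq_bigr do rewrite exchange_big /=.
by rewrite exchange_big.
Qed.

(* coordinates of the sum of the basis vectors b_(t1 j) over the j with eps j *)
Definition subset_sum_crd e n (t1 : {ffun 'I_n -> 'I_(N e)}) (eps : {ffun 'I_n -> bool})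
    (a : 'I_(N e)) : k :=
  \sum_(j | eps j) ((t1 j == a)%:R : k).

Lemma sum_symlin_mulb_crd e d n (t1 : {ffun 'I_n -> 'I_(N e)}) (eps : {ffun 'I_n -> bool})
    (w : 'I_(N d) -> k) :
  \sum_(j | eps j) symlin (mulb_crd (t1 j) w) =
  \sum_j' w j' *: mulv_form (subset_sum_crd t1 eps) j'.
Proof.
rewrite /symlin /mulv_form /mulb_crd exchange_big /=.
under [RHS]eq_bigr do rewrite scaler_sumr.
rewrite [RHS]exchange_big /=; apply/eq_bigr => l _.
rewrite -scaler_suml.
under [RHS]eq_bigr do rewrite scalerA.
rewrite -scaler_suml; congr (_ *: _).
rewrite exchange_big /=; apply/eq_bigr => j' _; rewrite -mulr_sumr; congr (_ * _).
rewrite /subset_sum_crd; under [RHS]eq_bigr do rewrite mulr_suml.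
rewrite [RHS]exchange_big /=; apply/eq_bigr => i _.
rewrite (bigD1 (t1 i)) //= eqxx mul1r big1 ?addr0 // => a /negbTE.
by rewrite eq_sym => ->; rewrite mul0r.
Qed.

Lemma sym_mulv_prod_symlin d e n (v : 'I_(N e) -> k) (w : 'I_n -> 'I_(N d) -> k) :
  sym_mulv v (\prod_i symlin (w i)) = \prod_i \sum_j' w i j' *: mulv_form v j'.
Proof.
rewrite /sym_mulv rmorph_prod; apply: eq_bigr => i _.
by rewrite /= /symlin mmap_linear_form.
Qed.

Lemma sym_mulv_sumZ d e (v : 'I_(N e) -> k) (T : Type) (r : seq T) (c : T -> k)
    (P : T -> {mpoly k[N d]}) :
  sym_mulv v (\sum_(x <- r) c x *: P x) = \sum_(x <- r) c x *: sym_mulv v (P x).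
Proof.
rewrite /sym_mulv raddf_sum; apply: eq_bigr => x _.
by rewrite /= mmapZ mul_mpolyC.
Qed.

Lemma symrep_tmul_rep e d n (g : tensor G e n) (s : seq (k * ('I_n -> 'I_(N d) -> k))) :
  is_sym_tensor g ->
  n`!%:R *: symrep (tmul_rep g s) =
  \sum_(t1 : {ffun 'I_n -> 'I_(N e)}) \sum_(eps : {ffun 'I_n -> bool})
     (g t1 * \prod_x (if eps x then 1 else -1)) *:
       sym_mulv (subset_sum_crd t1 eps) (symrep s).
Proof.
move=> g_sym.
transitivity (\sum_(y <- s) \sum_(t1 : {ffun 'I_n -> 'I_(N e)})
     \sum_(eps : {ffun 'I_n -> bool})
     (y.1 * (g t1 * \prod_x (if eps x then 1 else -1))) *:
        sym_mulv (subset_sum_crd t1 eps) (\prod_i symlin (y.2 i))).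
  rewrite /symrep /tmul_rep big_map big_allpairs scaler_sumr; apply: eq_bigr => y _.
  rewrite big_enum /=.
  transitivity (y.1 *: (n`!%:R *: \sum_(t1 : {ffun 'I_n -> 'I_(N e)}) g t1 *:
       \prod_i symlin (mulb_crd (t1 i) (y.2 i)))).
    rewrite scalerA mulrC -scalerA; congr (_ *: _); rewrite scaler_sumr.
    by apply: eq_bigr => t1 _; rewrite scalerA mulrC.
  rewrite (polarization (fun i a => symlin (mulb_crd a (y.2 i))) g_sym) scaler_sumr.
  apply: eq_bigr => t1 _; rewrite scalerA scaler_sumr; apply: eq_bigr => eps _.
  rewrite scalerA mulrA sym_mulv_prod_symlin; congr (_ *: _).
  by apply: eq_bigr => i _; rewrite sum_symlin_mulb_crd.
rewrite exchange_big /=; apply: eq_bigr => t1 _.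
rewrite exchange_big /=; apply: eq_bigr => eps _.
rewrite /symrep (sym_mulv_sumZ _ _ (fun y => y.1) (fun y => \prod_i symlin (y.2 i))).
by rewrite scaler_sumr; apply: eq_bigr => y _; rewrite scalerA mulrC.
Qed.

Lemma mulv_closed_diideal (I : Defs.family G) :
  [pchar k] =i pred0 -> is_ideal I -> mulv_closed I -> is_diideal I.
Proof.
move=> char0 Iideal Iclosed; split=> // d e n f g [s [Is Sf]] g_sym.
exists (tmul_rep g s); split; last by move=> t; apply: Srep_tmul_rep.
have nfact_neq0 : n`!%:R != 0 :> k.
  by rewrite ((GRing.pcharf0P k).1 char0) -lt0n fact_gt0.
rewrite -[symrep _]scale1r -(mulVf nfact_neq0) -scalerA symrep_tmul_rep //.
apply: (Iideal _ _).2.2.2.1.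
apply: ideal_sum => // t1 _; apply: ideal_sum => // eps _.
by apply: (Iideal _ _).2.2.2.1; apply: Iclosed.
Qed.

End DiIdeal.

Unset Implicit Arguments.
Theorem proposition4p3 (k : fieldType) (B : comAlgType k) (G : gradedData B)
  (char0 : [pchar k] =i pred0) (HB : is_graded_alg G) (r : nat) (hr : (0 < r)%N) :
  is_diideal (IB G r).
Proof.
case: r hr => // r _; have [IB_ideal IB_closed] := IB_ideal_mulv_closed HB r.
exact: mulv_closed_diideal.
Qed.
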